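(* Let $\mathcal{H}$ be a finite $k$-uniform hypergraph such that: (i) $\mathcal{H}$ has a vertex $z$ of degree $2$; (ii) $\delta(\mathcal{H} \setminus \{z\}) \geq 3$ and $d_{\mathcal H}(u) \geq 4$ for every $u \in V(\mathcal{H}) \setminus \{z\}$; (iv) for every two edges $e, e' \in E(\mathcal{H})$, every monomorphism $\phi : V(\mathcal{H} \setminus \{e, e'\}) \to V(\mathcal{H})$ is the identity. Then for every edge $e \in E(\mathcal{H})$, every monomorphism $\phi : V(\mathcal{H} \setminus \{e\}) \to V(\mathcal{H})$ is the identity.
   Context: $d_{\mathcal H}(x)$ is the number of edges containing $x$; $\delta$ is minimum degree. $\mathcal{H}\setminus\{z\}$ for a vertex $z$ is obtained by deleting $z$ and all edges containing it. For a set $S$ of edges, $\mathcal{H}\setminus S$ is the hypergraph with edge set $E(\mathcal H)\setminus S$, and $V(\mathcal{H}\setminus S)$ denotes the union of its edges. A monomorphism $\phi: V(\mathcal{F}')\to V(\mathcal{F})$ (for $\mathcal F'\subseteq \mathcal F$) is an injective map such that $\{\phi(a): a\in x\}$ is an edge of $\mathcal F$ for every edge $x$ of $\mathcal F'$; ''identity'' means $\phi(a)=a$ for all $a$ in the domain. *)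

From mathcomp Require Import all_boot.
Set Implicit Arguments. Unset Strict Implicit. Unset Printing Implicit Defensive.

(* A finite hypergraph on vertex type T: vertex set V and edge set E,
   every edge being a subset of V. *)

Definition hdeg (T : finType) (E : {set {set T}}) (x : T) : nat :=
  #|[set e in E | x \in e]|.

(* edge set of H \ {z} : delete z and all edges containing it *)
Definition del_vertex_edges (T : finType) (E : {set {set T}}) (z : T)
  : {set {set T}} := [set e in E | z \notin e].

(* V(H \ S) : the union of the edges of H \ S *)
Definition vset_del (T : finType) (E S : {set {set T}}) : {set T} :=
  cover (E :\: S).

Definition is_mono (T : finType) (V : {set T}) (E S : {set {set T}})
  (phi : T -> T) : Prop :=
  [/\ {in vset_del E S &, injective phi},
      {in vset_del E S, forall a, phi a \in V} &
      forall x, x \in E :\: S -> phi @: x \in E].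

Definition is_identity_on (T : finType) (E S : {set {set T}}) (phi : T -> T)
  : Prop := {in vset_del E S, forall a, phi a = a}.

From mathcomp Require Import all_boot.

(* Pick an edge e' other than e and avoiding z.  The restriction of phi to
   V(H \ {e, e'}) is a monomorphism, hence the identity there by (iv).  Every
   vertex of e' differs from z, so it has degree at least 4 and lies in an edge
   outside {e, e'}: deleting e' does not shrink the vertex set, and
   V(H \ {e, e'}) = V(H \ {e}). *)

Section DeletedHypergraph.

Context {T : finType} {E : {set {set T}}}.

Lemma hdeg_gt_card {S : {set {set T}}} {a : T} :
  #|S| < hdeg E a -> exists2 f, f \in E :\: S & a \in f.
Proof.
move=> ltSa; have : ~~ ([set f in E | a \in f] \subset S).
  by apply: contraTN ltSa => /subset_leq_card; rewrite -leqNgt.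
case/subsetPn => f; rewrite !inE => /andP[fE af] fS.
by exists f; rewrite ?inE ?fS.
Qed.

Lemma vset_delS {S S' : {set {set T}}} :
  S \subset S' -> vset_del E S' \subset vset_del E S.
Proof.
move=> sSS'; apply/subsetP => a /bigcupP[f]; rewrite inE => /andP[fS' fE] af.
apply/bigcupP; exists f => //; rewrite inE fE andbT.
by apply: contra fS'; apply: (subsetP sSS').
Qed.

Lemma vset_del_eq (S S' : {set {set T}}) :
  S \subset S' ->
  (forall f a, f \in S' :\: S -> f \in E -> a \in f -> #|S'| < hdeg E a) ->
  vset_del E S' = vset_del E S.
Proof.
move=> sSS' degS'; apply/eqP; rewrite eqEsubset vset_delS //=.
apply/subsetP => a /bigcupP[f]; rewrite inE => /andP[fS fE] af.
have [fS'|fS'] := boolP (f \in S'); last first.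
  by apply/bigcupP; exists f; rewrite ?inE ?fS' ?fE.
have fS'S : f \in S' :\: S by rewrite inE fS fS'.
have [g gES' ag] := hdeg_gt_card (degS' f a fS'S fE af).
by apply/bigcupP; exists g.
Qed.

Lemma is_monoS {V : {set T}} {S S' : {set {set T}}} {phi : T -> T} :
  S \subset S' -> is_mono V E S phi -> is_mono V E S' phi.
Proof.
move=> sSS' [inj_phi phiV phiE]; have sub := subsetP (vset_delS sSS').
split=> [x y /sub x_in /sub y_in | x /sub | x].
- exact: inj_phi.
- exact: phiV.
- rewrite inE => /andP[xS' xE]; apply: phiE; rewrite inE xE andbT.
  by apply: contra xS'; apply: (subsetP sSS').
Qed.

Lemma exists_vertex_other {V : {set T}} {z : T} :
  (forall e, e \in E -> e \subset V) -> 1 < hdeg E z ->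
  exists u, u \in V :\ z.
Proof.
move=> sEV lt1z; apply/existsP; move: lt1z; apply: contraTT => /existsPn noV.
rewrite -leqNgt.
apply: (@leq_trans #|[set [set z]]|); last by rewrite cards1.
apply/subset_leq_card/subsetP => f; rewrite !inE => /andP[fE zf].
apply/eqP/setP => x; rewrite inE; apply/idP/eqP => [xf|-> //].
apply/eqP; move: (noV x); rewrite !inE (subsetP (sEV f fE) x xf) andbT.
by rewrite negbK.
Qed.

End DeletedHypergraph.

Theorem lemma3p2 (T : finType) (k : nat) (V : {set T}) (E : {set {set T}})
  (z : T)
  (HEV : forall e, e \in E -> e \subset V)
  (Hunif : forall e, e \in E -> #|e| = k)
  (Hz : z \in V)
  (Hdz : hdeg E z = 2)
  (Hmin : forall u, u \in V :\ z -> 3 <= hdeg (del_vertex_edges E z) u)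
  (Hdeg : forall u, u \in V :\ z -> 4 <= hdeg E u)
  (Hrig2 : forall e e', e \in E -> e' \in E -> e != e' ->
     forall phi : T -> T, is_mono V E [set e; e'] phi ->
       is_identity_on E [set e; e'] phi) :
  forall e, e \in E ->
    forall phi : T -> T, is_mono V E [set e] phi -> is_identity_on E [set e] phi.
Proof.
move=> e eE phi mono_phi.
have [u uV] : exists u, u \in V :\ z by apply: exists_vertex_other HEV _; rewrite Hdz.
have lt_e_u : #|[set e]| < hdeg (del_vertex_edges E z) u.
  by rewrite cards1 (leq_trans _ (Hmin u uV)).
have [e'] := hdeg_gt_card lt_e_u.
rewrite !inE => /andP[nee' /andP[e'E ze']] _.
have sS : [set e] \subset [set e; e'] by rewrite sub1set !inE eqxx.
have Hcover : vset_del E [set e; e'] = vset_del E [set e].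
  apply: vset_del_eq => // f a; rewrite !inE => /andP[nef].
  rewrite (negPf nef) => /eqP-> _ ae'.
  have aV : a \in V :\ z.
    by rewrite !inE (subsetP (HEV _ e'E) _ ae') andbT; apply: contraNneq ze' => <-.
  by apply: leq_trans (Hdeg a aV); rewrite cards2; case: (e != e').
rewrite /is_identity_on -Hcover.
by apply: Hrig2 => //; [rewrite eq_sym | apply: is_monoS mono_phi].
Qed.
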